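(* Let $m\ge 2$ and let $C_1,\dots,C_m\subset\mathbb{R}^n$ be nonempty, closed, convex sets; put $C=C_1\times\cdots\times C_m$ and, for $a=(a_1,\dots,a_m)\in C$, $D(a)=\sum_{i=1}^m\|a_i-a_{i+1}\|$ with $a_{m+1}=a_1$. Suppose that either (i) all the sets $C_1,\dots,C_m$ are bounded, or (ii) for every index $j\in\{1,\dots,m\}$ such that $C_j$ is unbounded, and for every sequence $(a_j^{(k)})_{k}\subset C_j$ with $\|a_j^{(k)}\|\to\infty$, at least one of $d_{C_{j-1}}(a_j^{(k)})\to\infty$ or $d_{C_{j+1}}(a_j^{(k)})\to\infty$ holds as $k\to\infty$ (indices taken cyclically, $C_0=C_m$, $C_{m+1}=C_1$). Then the problem $\min_{a\in C} D(a)$ admits an optimal solution, i.e. there is $a^*\in C$ with $D(a^* )=\inf_{a\in C}D(a)$.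
   Context: $\|\cdot\|$ is the Euclidean norm on $\mathbb{R}^n$. For a nonempty set $K\subset\mathbb{R}^n$, $d_K(x)=\inf_{y\in K}\|x-y\|$ is the distance function of $K$. The problem $\min_{a\in C}D(a)$ is called the generalized waist problem for the ordered family $(C_1,\dots,C_m)$. *)

From HB Require Import structures.
From mathcomp Require Import all_boot all_order all_algebra.
From mathcomp Require Import all_classical all_reals all_analysis.
Set Implicit Arguments. Unset Strict Implicit. Unset Printing Implicit Defensive.
Import Order.TTheory GRing.Theory Num.Theory numFieldNormedType.Exports.
Local Open Scope classical_set_scope.
Local Open Scope ring_scope.

Definition enorm (R : realType) (n : nat) (x : 'rV[R]_n) : R :=
  Num.sqrt (\sum_(i < n) x ord0 i ^+ 2).

Definition dist_to (R : realType) (n : nat) (K : set 'rV[R]_n) (x : 'rV[R]_n) : R :=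
  inf [set enorm (x - y) | y in K].

Definition ebounded (R : realType) (n : nat) (K : set 'rV[R]_n) : Prop :=
  exists M : R, forall x, K x -> enorm x <= M.

Definition convexR (R : realType) (n : nat) (K : set 'rV[R]_n) : Prop :=
  convex_set (K : set (convex_lmodType 'rV[R]_n)).

Definition perim (R : realType) (n m : nat) (a : 'I_m -> 'rV[R]_n) : R :=
  \sum_(i < m) enorm (a i - a (ordS i)).

From HB Require Import structures.
From mathcomp Require Import all_boot all_order all_algebra.
From mathcomp Require Import all_classical all_reals all_analysis.
Import Order.TTheory GRing.Theory Num.Theory numFieldNormedType.Exports.
Local Open Scope classical_set_scope.
Local Open Scope ring_scope.
Import ArrowAsProduct.

Set Implicit Arguments.
Unset Strict Implicit.
Unset Printing Implicit Defensive.

(* The perimeter is continuous, so it attains its minimum on any compact set.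
   A sublevel set {a in C | D(a) <= D(b0)} is closed, and it is bounded: in
   case (i) trivially, in case (ii) because along an unbounded sequence in the
   sublevel set some a_j would drift arbitrarily far from C_(j-1) or C_(j+1),
   while d_(C_(j+1))(a_j) <= ||a_j - a_(j+1)|| <= D(a) <= D(b0).  Minimizing
   over this compact sublevel set minimizes over all of C. *)

Section EuclideanNorm.
Variables (R : realType) (n : nat).
Implicit Types (x y : 'rV[R]_n) (K : set 'rV[R]_n).

Lemma enorm_ge0 x : 0 <= enorm x.
Proof. exact: sqrtr_ge0. Qed.

Lemma enorm_distC x y : enorm (x - y) = enorm (y - x).
Proof.
rewrite /enorm; congr Num.sqrt; apply: eq_bigr => i _.
by rewrite -opprB mxE sqrrN.
Qed.

Lemma coord_le_enorm x i : `|x ord0 i| <= enorm x.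
Proof.
rewrite /enorm -sqrtr_sqr ler_sqrt ?sumr_ge0 // => [|j _]; last exact: sqr_ge0.
by rewrite (bigD1 i) //= lerDl sumr_ge0 // => j _; exact: sqr_ge0.
Qed.

Lemma normr_le_enorm x : `|x| <= enorm x.
Proof.
rewrite [`|x|]mx_normrE; apply: bigmax_le => [|[i j] _] /=; first exact: enorm_ge0.
by rewrite (ord1 i); exact: coord_le_enorm.
Qed.

Lemma continuous_enorm : continuous (@enorm R n).
Proof.
move=> x; apply: (@continuous_comp _ _ _
  (fun y : 'rV[R]_n => \sum_(i < n) y ord0 i ^+ 2) Num.sqrt); last exact: sqrt_continuous.
apply: (@continuous_big _ _ +%R 0 xpredT add_continuous _ (index_enum _)
  (fun i (y : 'rV[R]_n) => y ord0 i ^+ 2)) => i _ z.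
apply: (@continuous_comp _ _ _ (fun y : 'rV[R]_n => y ord0 i) (fun t : R => t ^+ 2)).
  exact: coord_continuous.
exact: exprn_continuous.
Qed.

Lemma dist_to_le K x y : K y -> dist_to K x <= enorm (x - y).
Proof.
move=> Ky; apply: ge_inf; last by exists y.
by exists 0 => _ [z _ <-]; exact: enorm_ge0.
Qed.

Lemma compact_closedI_ball K (M : R) :
  closed K -> compact (K `&` closed_ball_ Num.norm 0 M).
Proof.
move=> Kcl; apply: bounded_closed_compact; last first.
  by apply: closedI => //; exact: closed_closed_ball_.
exists M; split; first exact: num_real.
move=> N MN x [_]; rewrite /closed_ball_ /= sub0r normrN => xM.
exact/ltW/(le_lt_trans xM).
Qed.

Lemma compact_prod_closedI_ball (I : eqType) (C : I -> set 'rV[R]_n) (M : I -> R) :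
  (forall i, closed (C i)) ->
  compact [set b : I -> 'rV[R]_n | forall i, (C i `&` closed_ball_ Num.norm 0 (M i)) (b i)].
Proof.
move=> C_closed.
exact: (@tychonoff _ (fun _ => 'rV[R]_n) (fun i => C i `&` closed_ball_ Num.norm 0 (M i))
  (fun i => compact_closedI_ball (C_closed i))).
Qed.

End EuclideanNorm.

Section Perimeter.
Variables (R : realType) (n m : nat).
Implicit Types (a : 'I_m -> 'rV[R]_n).

Lemma enorm_le_perim a j : enorm (a j - a (ordS j)) <= perim a.
Proof. by rewrite /perim (bigD1 j) //= lerDl sumr_ge0 // => i _; exact: enorm_ge0. Qed.

Lemma enorm_le_perim_pred a j : enorm (a j - a (ord_pred j)) <= perim a.
Proof. by have := enorm_le_perim a (ord_pred j); rewrite ord_predK enorm_distC. Qed.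

Lemma continuous_perim : continuous (@perim R n m : ('I_m -> 'rV[R]_n) -> R).
Proof.
apply: (@continuous_big _ _ +%R 0 xpredT add_continuous _ (index_enum _)
  (fun i a => enorm (a i - a (ordS i)))) => i _ a.
apply: (@continuous_comp _ _ _ (fun a : 'I_m -> 'rV[R]_n => a i - a (ordS i)) (@enorm R n));
  last exact: continuous_enorm.
by apply: continuousB; exact: proj_continuous.
Qed.

End Perimeter.

Lemma unbounded_cvgry (R : realType) (T : Type) (P : set T) (f : T -> R) :
  ~ (exists M, forall x, P x -> f x <= M) ->
  exists u : nat -> T, (forall k, P (u k)) /\ f \o u @ \oo --> +oo.
Proof.
move=> unbounded.
have /choice[u uP] : forall k : nat, exists x, P x /\ k%:R < f x.
  move=> k; apply: contrapT => nox; apply: unbounded; exists k%:R => x Px.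
  by rewrite leNgt; apply/negP => kx; apply: nox; exists x.
exists u; split=> [k|]; first exact: (uP k).1.
apply/cvgryPge => A; exists (Num.truncn A).+1 => // k /= Ak.
apply/ltW/(lt_trans (truncnS_gt A))/(le_lt_trans _ (uP k).2).
by rewrite ler_nat.
Qed.

Lemma sublevel_compact_min (R : realType) (T : topologicalType) (f : T -> R)
    (A K : set T) (a0 : T) (c : R) :
  K `<=` A -> (forall b, A b -> f b <= c -> K b) -> A a0 -> f a0 <= c ->
  compact K -> {within K, continuous f} ->
  exists2 a, A a & forall b, A b -> f a <= f b.
Proof.
move=> KA sublevelK Aa0 a0c Kcpt fcont.
have [a /set_mem Ka amin] := compact_EVT_min (ex_intro _ a0 (sublevelK _ Aa0 a0c))
  Kcpt fcont.
have ac : f a <= c := le_trans (amin _ (mem_set (sublevelK _ Aa0 a0c))) a0c.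
exists a => [|b Ab]; first exact: KA.
have [bc|/ltW cb] := leP (f b) c; last exact: le_trans cb.
exact/amin/mem_set/sublevelK.
Qed.

Lemma min_eq_inf_image (R : realType) (T : Type) (f : T -> R) (A : set T) a :
  A a -> (forall b, A b -> f a <= f b) -> f a = inf (f @` A).
Proof.
move=> Aa amin; apply/eqP; rewrite eq_le; apply/andP; split.
  by apply: lb_le_inf; [exists (f a), a | move=> _ [b Ab <-]; exact: amin].
apply: ge_inf; last by exists a.
by exists (f a) => _ [b Ab <-]; exact: amin.
Qed.

Section SublevelBounded.
Variables (R : realType) (n m : nat) (C : 'I_m -> set 'rV[R]_n).

Lemma perim_sublevel_coord_bounded (c : R) :
  (forall j : 'I_m, ~ ebounded (C j) ->
      forall u : nat -> 'rV[R]_n, (forall k, C j (u k)) ->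
        (fun k => enorm (u k)) @ \oo --> +oo ->
        ((fun k => dist_to (C (ord_pred j)) (u k)) @ \oo --> +oo \/
         (fun k => dist_to (C (ordS j)) (u k)) @ \oo --> +oo)) ->
  forall j, exists M, forall a : 'I_m -> 'rV[R]_n,
    (forall i, C i (a i)) /\ perim a <= c -> enorm (a j) <= M.
Proof.
move=> escape j; apply: contrapT => /unbounded_cvgry[a [aC aj_oo]].
have Cj_unbounded : ~ ebounded (C j).
  move=> [M CjM]; have [k /= Mk] := filter_ex (cvgry_gt aj_oo M).
  by move: (CjM _ ((aC k).1 j)); rewrite leNgt Mk.
have escape_contradicts_perim (i : 'I_m) :
    (fun k => dist_to (C i) (a k j)) @ \oo --> +oo ->
    (forall k, enorm (a k j - a k i) <= perim (a k)) -> False.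
  move=> dist_oo aperim; have [k /= ck] := filter_ex (cvgry_gt dist_oo c).
  have [aCk perimc] := aC k.
  have := le_trans (dist_to_le (a k j) (aCk i)) (le_trans (aperim k) perimc).
  by rewrite leNgt ck.
have [pred_oo|succ_oo] := escape j Cj_unbounded _ (fun k => (aC k).1 j) aj_oo.
- by apply: escape_contradicts_perim pred_oo _ => k; exact: enorm_le_perim_pred.
- by apply: escape_contradicts_perim succ_oo _ => k; exact: enorm_le_perim.
Qed.

End SublevelBounded.

Theorem mainTheorem1 (R : realType) (n m : nat) (C : 'I_m -> set 'rV[R]_n) :
  (2 <= m)%N ->
  (forall i, C i !=set0) ->
  (forall i, closed (C i)) ->
  (forall i, convexR (C i)) ->
  ((forall i, ebounded (C i)) \/
   (forall j : 'I_m, ~ ebounded (C j) ->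
      forall u : nat -> 'rV[R]_n, (forall k, C j (u k)) ->
        (fun k => enorm (u k)) @ \oo --> +oo ->
        ((fun k => dist_to (C (ord_pred j)) (u k)) @ \oo --> +oo \/
         (fun k => dist_to (C (ordS j)) (u k)) @ \oo --> +oo))) ->
  exists a : 'I_m -> 'rV[R]_n, (forall i, C i (a i)) /\
    perim a = inf [set perim b | b in [set b : 'I_m -> 'rV[R]_n | forall i, C i (b i)]].
Proof.
move=> _ C_neq0 C_closed _ bounded_or_escape.
have /choice[a0 a0C] : forall i, exists x, C i x by move=> i; have [x] := C_neq0 i; exists x.
set A := [set b : 'I_m -> 'rV[R]_n | forall i, C i (b i)].
have /choice[M sublevelM] : forall j, exists M, forall a,
    A a /\ perim a <= perim a0 -> enorm (a j) <= M.
  case: bounded_or_escape => [C_bounded j|]; last exact: perim_sublevel_coord_bounded.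
  by have [M CM] := C_bounded j; exists M => a [aC _]; exact: CM.
pose K := [set b : 'I_m -> 'rV[R]_n |
  forall i, (C i `&` closed_ball_ Num.norm 0 (M i)) (b i)].
have [a Aa amin] : exists2 a, A a & forall b, A b -> perim a <= perim b.
  apply: (@sublevel_compact_min _ _ _ A K a0 (perim a0)) => //.
  - by move=> b bK i; exact: (bK i).1.
  - move=> b Ab bc i; split; first exact: Ab.
    rewrite /closed_ball_ /= sub0r normrN.
    exact: le_trans (normr_le_enorm _) (sublevelM i b (conj Ab bc)).
  - exact: compact_prod_closedI_ball.
  - exact: continuous_subspaceT (@continuous_perim R n m).
by exists a; split; last exact: min_eq_inf_image.
Qed.
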